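(* Let the spot price $\pi$ have CDF $F_{\pi}$ and monotonically decreasing density $f_{\pi}$ on $[\underline{\pi},\bar{\pi}]$ with $0\le\underline{\pi}<\bar{\pi}$, and let $t_k,t_e,t_s>0$ with $t_s>t_e$. Consider the problem (P1): minimize over $(q,p)$ $$\Phi_1(p,q)=q\,t_e\bar{\pi}+\frac{(1-q)t_e\int_{\underline{\pi}}^{p}x f_{\pi}(x)\,dx}{F_{\pi}(p)}$$ subject to $(1-q)t_e\le \frac{t_k}{1-F_{\pi}(p)}$, $\; t_k\left(\frac{1}{F_{\pi}(p)}-1\right)+(1-q)t_e\le t_s$, $\; q t_e\le t_s$, $\;\underline{\pi}\le p\le\bar{\pi}$, $\;0\le q\le 1$. Then the optimal bid price is $p^*=F_{\pi}^{-1}\!\left(1-\frac{t_k}{t_e}\right)$ and the optimal fraction of the job run on the on-demand instance is $q^*=0$.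
   Context: Model: a user runs a fraction $q$ of a job (execution time $t_e$, deadline $t_s$) on an on-demand instance at price $\bar{\pi}$ and the rest on a spot instance via a one-time request with bid $p$; spot prices in slots of length $t_k$ are i.i.d. with CDF $F_{\pi}$ and monotonically decreasing density $f_{\pi}$ on $[\underline{\pi},\bar{\pi}]$.
   Formalization: Two hypotheses join tₛ > tₑ: tₖ < tₑ, and tₖ(1/(1 − tₖ/tₑ) − 1) + tₑ ≤ tₛ, the deadline constraint of (P1) at p* with q = 0. The statement above fails without it. *)

From Stdlib Require Import Reals.
From Coquelicot Require Import Coquelicot.
Open Scope R_scope.

Definition spot_price_model (lo hi : R) (f F : R -> R) : Prop :=
  0 <= lo < hi /\
  (forall x, lo <= x <= hi -> 0 <= f x) /\
  (forall x y, lo <= x -> x <= y -> y <= hi -> f y <= f x) /\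
  ex_RInt f lo hi /\
  RInt f lo hi = 1 /\
  (forall x, lo <= x <= hi -> F x = RInt f lo x).

Definition Finv (lo hi : R) (F : R -> R) (y : R) : R :=
  real (Glb_Rbar (fun x => lo <= x <= hi /\ y <= F x)).

Definition Phi1 (hi te : R) (f F : R -> R) (lo p q : R) : R :=
  q * te * hi + (1 - q) * te * RInt (fun x => x * f x) lo p / F p.

(* Constraints of (P1).  The terms t_k/(1-F p) and 1/F p are read as +oo
   when the denominator vanishes: the first constraint is then automatically
   satisfied, the second one violated. *)
Definition P1_feasible (lo hi tk te ts : R) (F : R -> R) (p q : R) : Prop :=
  (F p < 1 -> (1 - q) * te <= tk / (1 - F p)) /\
  (0 < F p /\ tk * (1 / F p - 1) + (1 - q) * te <= ts) /\
  q * te <= ts /\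
  lo <= p <= hi /\
  0 <= q <= 1.

Definition P1_optimal (lo hi tk te ts : R) (f F : R -> R) (p q : R) : Prop :=
  P1_feasible lo hi tk te ts F p q /\
  forall p' q', P1_feasible lo hi tk te ts F p' q' ->
    Phi1 hi te f F lo p q <= Phi1 hi te f F lo p' q'.

From Stdlib Require Import Reals Lra Lia Psatz ZArith.
From Coquelicot Require Import Coquelicot.
Open Scope R_scope.

(* With G p := (int_lo^p x f x dx) / F p the expected spot price given that the
   bid p is met, the cost is Phi1 p q = te (q hi + (1 - q) G p), and the claimed
   bid is the quantile r with 1 - F r = tk/te.  Since G is nondecreasing and
   G <= hi, bidding above r or buying on-demand capacity never pays.  A bid
   p < r is only feasible with (1 - q) (1 - F p) <= 1 - F r, and because the
   density is decreasing the mass above r is small against the mass below it,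
   which gives (1 - F r) (hi - G p) <= (1 - F p) (hi - G r): the on-demand share
   then costs more than it saves.  That x f x is integrable at all follows from
   approximating the identity uniformly by staircase functions. *)

Lemma ex_RInt_sub (f : R -> R) (a b u v : R) :
  a <= u -> u <= v -> v <= b -> ex_RInt f a b -> ex_RInt f u v.
Proof.
  intros Hau Huv Hvb Hf.
  apply (ex_RInt_Chasles_2 f a u v); [lra|].
  apply (ex_RInt_Chasles_1 f a v b); [lra|exact Hf].
Qed.

Lemma RInt_sub_diff (g : R -> R) (a b u v : R) :
  a <= u -> u <= v -> v <= b -> ex_RInt g a b -> RInt g a v - RInt g a u = RInt g u v.
Proof.
  intros Hau Huv Hvb Hg.
  rewrite <- (RInt_Chasles g a u v).
  - unfold plus; simpl; ring.
  - apply (ex_RInt_sub g a b); [lra|lra|lra|exact Hg].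
  - apply (ex_RInt_sub g a b); [lra|lra|lra|exact Hg].
Qed.

Lemma ex_RInt_Zfloor_mult (N : R) (f : R -> R) (a b : R) :
  0 < N -> a <= b -> ex_RInt f a b ->
  ex_RInt (fun x => IZR (Zfloor (N * x)) * f x) a b.
Proof.
  intros HN Hab Hf.
  set (z0 := Zfloor (N * a)).
  assert (Hz0 := Zfloor_bound (N * a)); fold z0 in Hz0.
  assert (const_step : forall (z : Z) u v, u <= v -> IZR z <= N * u -> N * v <= IZR z + 1 ->
            ex_RInt f u v -> ex_RInt (fun x => IZR (Zfloor (N * x)) * f x) u v).
  { intros z u v Huv Hu Hv Hfuv.
    apply (ex_RInt_ext (fun x => IZR z * f x)).
    - intros x Hx; rewrite Rmin_left, Rmax_right in Hx by lra.
      rewrite (Zfloor_eq z); [reflexivity | nra].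
    - exact (ex_RInt_scal f u v (IZR z) Hfuv). }
  assert (steps : forall (k : nat) b', a <= b' -> N * b' <= IZR (z0 + 1 + Z.of_nat k) ->
            ex_RInt f a b' -> ex_RInt (fun x => IZR (Zfloor (N * x)) * f x) a b').
  { induction k as [|k IH]; intros b' Hab' Hb' Hfb'.
    - apply (const_step z0); [lra|lra| |exact Hfb'].
      rewrite Z.add_0_r, plus_IZR in Hb'; exact Hb'.
    - set (z := (z0 + 1 + Z.of_nat k)%Z) in *.
      destruct (Rle_dec (N * b') (IZR z)) as [Hle|Hgt]; [exact (IH b' Hab' Hle Hfb')|].
      set (c := IZR z / N).
      assert (Hc : N * c = IZR z) by (unfold c; field; lra).
      assert (Hz : IZR z0 + 1 <= IZR z) by (rewrite <- plus_IZR; apply IZR_le; lia).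
      assert (Hac : a <= c) by nra.
      assert (Hcb : c <= b') by nra.
      apply (ex_RInt_Chasles _ a c b').
      + apply IH; [lra|lra|].
        exact (ex_RInt_Chasles_1 f a c b' (conj Hac Hcb) Hfb').
      + apply (const_step z); [lra|lra| |].
        * rewrite Nat2Z.inj_succ, <- Z.add_1_r, Z.add_assoc, plus_IZR in Hb'; exact Hb'.
        * exact (ex_RInt_Chasles_2 f a c b' (conj Hac Hcb) Hfb'). }
  apply (steps (Z.to_nat (Zfloor (N * b) - z0))); [lra| |exact Hf].
  assert (Hzb : (z0 <= Zfloor (N * b))%Z) by (apply Zfloor_le; nra).
  rewrite Z2Nat.id by lia.
  replace (z0 + 1 + (Zfloor (N * b) - z0))%Z with (Zfloor (N * b) + 1)%Z by lia.
  rewrite plus_IZR; pose proof (Zfloor_bound (N * b)); lra.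
Qed.

Lemma ex_RInt_id_mult (f : R -> R) (a b : R) :
  a <= b -> ex_RInt f a b -> ex_RInt (fun x => x * f x) a b.
Proof.
  intros Hab Hf.
  destruct (ex_RInt_ub f a b Hf) as [M HM].
  rewrite Rmin_left, Rmax_right in HM by lra.
  set (clamp := fun x => Rmax a (Rmin b x)).
  assert (clamp_in : forall x, a <= clamp x <= b).
  { intro x; unfold clamp; split; [apply Rmax_l|].
    apply Rmax_lub; [lra|apply Rmin_l]. }
  assert (clamp_id : forall x, a <= x <= b -> clamp x = x).
  { intros x Hx; unfold clamp; rewrite Rmin_right, Rmax_right; lra. }
  set (g := fun x => f (clamp x)).
  assert (Hg_bound : forall x, Rabs (g x) <= M) by (intro x; apply HM, clamp_in).
  assert (HM0 : 0 <= M) by (eapply Rle_trans; [apply Rabs_pos|apply (Hg_bound a)]).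
  assert (Hg : ex_RInt g a b).
  { apply (ex_RInt_ext f); [|exact Hf].
    intros x Hx; rewrite Rmin_left, Rmax_right in Hx by lra.
    unfold g; rewrite clamp_id; lra. }
  set (stair := fun (n : nat) x => IZR (Zfloor (INR (S n) * x)) / INR (S n)).
  assert (stair_close : forall n x, Rabs (stair n x - x) <= / INR (S n)).
  { intros n x; unfold stair.
    assert (HN : 0 < INR (S n)) by (apply lt_0_INR; lia).
    pose proof (Zfloor_bound (INR (S n) * x)) as Hz.
    set (N := INR (S n)) in *; set (z := IZR (Zfloor (N * x))) in *.
    replace (z / N - x) with ((z - N * x) * / N) by (field; lra).
    rewrite Rabs_mult, (Rabs_right (/ N)) by (apply Rle_ge, Rlt_le, Rinv_0_lt_compat; lra).
    rewrite <- (Rmult_1_l (/ N)) at 2.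
    apply Rmult_le_compat_r; [apply Rlt_le, Rinv_0_lt_compat; lra|].
    apply Rabs_le; lra. }
  destruct (filterlim_RInt (fun n x => stair n x * g x) a b eventually eventually_filter
              (fun x => x * g x) (fun n => RInt (fun x => stair n x * g x) a b))
    as [I [_ HI]].
  - intro n; apply RInt_correct.
    apply (ex_RInt_ext (fun x => / INR (S n) * (IZR (Zfloor (INR (S n) * x)) * g x))).
    + intros x _; unfold stair, Rdiv; lra.
    + apply (ex_RInt_scal (V := R_NormedModule)).
      apply ex_RInt_Zfloor_mult; [apply lt_0_INR; lia|exact Hab|exact Hg].
  - intros P [eps HP].
    destruct (nfloor_ex (M / eps)) as [n0 Hn0].
    { apply Rmult_le_pos; [exact HM0|apply Rlt_le, Rinv_0_lt_compat, cond_pos]. }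
    exists n0; intros n Hn; apply HP; intro x.
    change (Rabs (stair n x * g x - x * g x) < eps).
    pose proof (cond_pos eps) as Heps.
    assert (HN : M / eps < INR (S n)) by (rewrite S_INR; apply le_INR in Hn; lra).
    replace (stair n x * g x - x * g x) with ((stair n x - x) * g x) by ring.
    rewrite Rabs_mult.
    apply Rle_lt_trans with (/ INR (S n) * M).
    + apply Rmult_le_compat; [apply Rabs_pos|apply Rabs_pos|apply stair_close|apply Hg_bound].
    + assert (HSn : 0 < INR (S n)) by (apply lt_0_INR; lia).
      apply (Rmult_lt_reg_l (INR (S n))); [exact HSn|].
      rewrite <- Rmult_assoc, Rinv_r, Rmult_1_l by lra.
      apply (Rmult_lt_reg_r (/ eps)); [apply Rinv_0_lt_compat; lra|].
      rewrite Rmult_assoc, Rinv_r, Rmult_1_r by lra; exact HN.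
  - apply (ex_RInt_ext (fun x => x * g x)); [|exists I; exact HI].
    intros x Hx; rewrite Rmin_left, Rmax_right in Hx by lra.
    unfold g; rewrite clamp_id; lra.
Qed.

Section Quantile.

Variables (lo hi y : R) (F : R -> R).
Hypothesis lo_le_hi : lo <= hi.
Hypothesis y_le_Fhi : y <= F hi.

Let level_set := fun x => lo <= x <= hi /\ y <= F x.

Lemma Finv_glb : is_glb_Rbar level_set (Finv lo hi F y).
Proof.
  unfold Finv; fold level_set.
  destruct (Glb_Rbar_correct level_set) as [Hlb Hglb].
  assert (Hhi : Rbar_le (Glb_Rbar level_set) hi) by (apply Hlb; split; lra).
  assert (Hlo : Rbar_le lo (Glb_Rbar level_set)) by (apply Hglb; intros x [Hx _]; simpl; lra).
  destruct (Glb_Rbar level_set); simpl in Hhi, Hlo |- *; try contradiction.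
  split; assumption.
Qed.

Lemma Finv_le x : lo <= x <= hi -> y <= F x -> Finv lo hi F y <= x.
Proof. intros Hx Hy; exact (proj1 Finv_glb x (conj Hx Hy)). Qed.

Lemma Finv_ge z : (forall x, lo <= x <= hi -> y <= F x -> z <= x) -> z <= Finv lo hi F y.
Proof. intro Hz; exact (proj2 Finv_glb z (fun x Hx => Hz x (proj1 Hx) (proj2 Hx))). Qed.

Lemma Finv_bounds : lo <= Finv lo hi F y <= hi.
Proof.
  split; [apply Finv_ge; intros x Hx _; lra|].
  apply Finv_le; [lra|exact y_le_Fhi].
Qed.

Variable L : R.
Hypothesis L_ge0 : 0 <= L.
Hypothesis F_lipschitz : forall x z, lo <= x -> x <= z -> z <= hi -> F z - F x <= L * (z - x).
Hypothesis Flo_le_y : F lo <= y.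

Lemma F_Finv : F (Finv lo hi F y) = y.
Proof.
  set (p := Finv lo hi F y).
  assert (Hp : lo <= p <= hi) by apply Finv_bounds.
  set (K := L + 1).
  assert (HK : 0 < K) by (unfold K; lra).
  assert (F_lip : forall x z, lo <= x -> x <= z -> z <= hi -> F z - F x <= K * (z - x)).
  { intros x z Hx Hxz Hz; pose proof (F_lipschitz x z Hx Hxz Hz); unfold K; nra. }
  destruct (Rtotal_order (F p) y) as [Hlt|[Heq|Hgt]]; [exfalso|exact Heq|exfalso].
  - set (eps := (y - F p) / K).
    assert (Heps : K * eps = y - F p) by (unfold eps; field; lra).
    assert (Heps0 : 0 < eps) by (unfold eps; apply Rdiv_lt_0_compat; lra).
    assert (p + eps <= p); [|lra].
    apply Finv_ge; intros x Hx Hyx.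
    assert (p <= x) by (apply Finv_le; assumption).
    destruct (Rle_dec (p + eps) x) as [Hle|Hgt]; [exact Hle|].
    pose proof (F_lip p x ltac:(lra) ltac:(lra) ltac:(lra)).
    assert (K * (x - p) < K * eps) by (apply Rmult_lt_compat_l; lra).
    lra.
  - assert (Hlop : lo < p).
    { destruct (Req_dec lo p) as [E|E]; [rewrite <- E in Hgt; lra|lra]. }
    set (eps := (F p - y) / K).
    assert (Heps : K * eps = F p - y) by (unfold eps; field; lra).
    assert (Heps0 : 0 < eps) by (unfold eps; apply Rdiv_lt_0_compat; lra).
    set (x := Rmax lo (p - eps)).
    assert (Hxlo : lo <= x) by apply Rmax_l.
    assert (Hxp : x < p) by (apply Rmax_lub_lt; lra).
    assert (Hpx : p - eps <= x) by apply Rmax_r.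
    pose proof (F_lip x p Hxlo ltac:(lra) ltac:(lra)).
    assert (K * (p - x) <= K * eps) by (apply Rmult_le_compat_l; lra).
    assert (p <= x) by (apply Finv_le; lra).
    lra.
Qed.

End Quantile.

Section SpotPrice.

Variables (lo hi : R) (f F : R -> R).
Hypothesis f_ge0 : forall x, lo <= x <= hi -> 0 <= f x.
Hypothesis f_decr : forall x y, lo <= x -> x <= y -> y <= hi -> f y <= f x.
Hypothesis f_int : ex_RInt f lo hi.
Hypothesis F_RInt : forall x, lo <= x <= hi -> F x = RInt f lo x.

Definition cond_mean (p : R) : R := RInt (fun x => x * f x) lo p / F p.

Lemma Phi1_cond_mean te p q : Phi1 hi te f F lo p q = te * (q * hi + (1 - q) * cond_mean p).
Proof. unfold Phi1, cond_mean, Rdiv; ring. Qed.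

Lemma ex_RInt_xf : lo <= hi -> ex_RInt (fun x => x * f x) lo hi.
Proof. intro Hlohi; exact (ex_RInt_id_mult f lo hi Hlohi f_int). Qed.

Lemma F_diff u v : lo <= u -> u <= v -> v <= hi -> F v - F u = RInt f u v.
Proof. intros; rewrite !F_RInt by lra; apply (RInt_sub_diff f lo hi); assumption. Qed.

Lemma RInt_f_bounds u v : lo <= u -> u <= v -> v <= hi ->
  f v * (v - u) <= RInt f u v <= f u * (v - u).
Proof.
  intros Hu Huv Hv.
  assert (Hf : ex_RInt f u v) by (apply (ex_RInt_sub f lo hi); assumption).
  replace (f v * (v - u)) with (RInt (fun _ => f v) u v)
    by (rewrite RInt_const; unfold scal; simpl; unfold mult; simpl; ring).
  replace (f u * (v - u)) with (RInt (fun _ => f u) u v)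
    by (rewrite RInt_const; unfold scal; simpl; unfold mult; simpl; ring).
  split; apply RInt_le; auto using ex_RInt_const; intros x Hx; apply f_decr; lra.
Qed.

Lemma RInt_xf_bounds u v : lo <= u -> u <= v -> v <= hi ->
  u * RInt f u v <= RInt (fun x => x * f x) u v <= v * RInt f u v.
Proof.
  intros Hu Huv Hv.
  assert (Hf : ex_RInt f u v) by (apply (ex_RInt_sub f lo hi); assumption).
  assert (Hxf : ex_RInt (fun x => x * f x) u v)
    by (apply (ex_RInt_sub _ lo hi); [assumption..|apply ex_RInt_xf; lra]).
  rewrite <- !(RInt_scal f u v) by exact Hf.
  split; apply RInt_le; try exact Huv; try exact Hxf; try exact (ex_RInt_scal f u v _ Hf);
    intros x Hx; apply Rmult_le_compat_r; try lra; apply f_ge0; lra.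
Qed.

Lemma F_le u v : lo <= u -> u <= v -> v <= hi -> F u <= F v.
Proof.
  intros Hu Huv Hv.
  assert (0 <= RInt f u v); [|pose proof (F_diff u v Hu Huv Hv); lra].
  apply RInt_ge_0; [lra|apply (ex_RInt_sub f lo hi); assumption|].
  intros x Hx; apply f_ge0; lra.
Qed.

Lemma F_lipschitz u v : lo <= u -> u <= v -> v <= hi -> F v - F u <= f lo * (v - u).
Proof.
  intros Hu Huv Hv.
  rewrite (F_diff u v Hu Huv Hv).
  destruct (RInt_f_bounds u v Hu Huv Hv) as [_ Hup].
  assert (f u * (v - u) <= f lo * (v - u)) by (apply Rmult_le_compat_r; [lra|apply f_decr; lra]).
  lra.
Qed.

Lemma F_Finv_density y : lo <= hi -> F lo <= y <= F hi -> F (Finv lo hi F y) = y.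
Proof.
  intros Hlohi Hy.
  apply (F_Finv lo hi y F Hlohi (proj2 Hy) (f lo)); [apply f_ge0; lra|exact F_lipschitz|exact (proj1 Hy)].
Qed.

Lemma cond_mean_bounds p : lo <= p <= hi -> 0 < F p -> lo <= cond_mean p <= p.
Proof.
  intros Hp HFp; unfold cond_mean.
  destruct (RInt_xf_bounds lo p) as [Hl Hu]; [lra|lra|lra|].
  rewrite <- (F_RInt p Hp) in Hl, Hu.
  split; [apply Rle_div_r|apply Rle_div_l]; lra.
Qed.

Lemma RInt_xf_split p p' : lo <= p -> p <= p' -> p' <= hi -> 0 < F p ->
  cond_mean p * F p + RInt (fun x => x * f x) p p' = RInt (fun x => x * f x) lo p'.
Proof.
  intros Hp Hpp' Hp' HFp.
  rewrite <- (RInt_sub_diff _ lo hi p p'); [|assumption..|apply ex_RInt_xf; lra].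
  unfold cond_mean; field; lra.
Qed.

Lemma cond_mean_le_compat p p' : lo <= p -> p <= p' -> p' <= hi -> 0 < F p ->
  cond_mean p <= cond_mean p'.
Proof.
  intros Hp Hpp' Hp' HFp.
  destruct (cond_mean_bounds p) as [_ HGp]; [lra|exact HFp|].
  destruct (RInt_xf_bounds p p') as [HB _]; [assumption..|].
  pose proof (F_le p p' Hp Hpp' Hp'); pose proof (F_diff p p' Hp Hpp' Hp').
  assert (HFp' : F p' > 0) by lra.
  unfold cond_mean at 2; rewrite <- (RInt_xf_split p p') by assumption.
  apply (Rle_div_r _ _ _ HFp').
  set (m := RInt f p p') in *.
  assert (cond_mean p * m <= p * m) by (apply Rmult_le_compat_r; lra).
  replace (F p') with (F p + m) by lra.
  lra.
Qed.

Lemma upper_tail_mass_le p' p : lo <= p' -> p' <= p -> p <= hi -> 0 < F p' ->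
  (F hi - F p) * (p - cond_mean p') <= F p' * (hi - cond_mean p') + (F p - F p') * (hi - p).
Proof.
  intros Hp' Hp'p Hp HFp'.
  destruct (cond_mean_bounds p') as [HGlo HGp']; [lra|exact HFp'|].
  set (G := cond_mean p') in *; set (phi := f p).
  (* the decreasing density lets all three masses be compared with phi *)
  assert (Hphi : 0 <= phi) by (apply f_ge0; lra).
  assert (Hn : F hi - F p <= phi * (hi - p)).
  { rewrite (F_diff p hi) by lra; apply (RInt_f_bounds p hi); lra. }
  assert (Hm : phi * (p - p') <= F p - F p').
  { rewrite (F_diff p' p) by lra; apply (RInt_f_bounds p' p); lra. }
  assert (Ha : phi * (p' - lo) <= F p').
  { assert (f p' * (p' - lo) <= F p').
    { rewrite (F_RInt p') by lra; apply (RInt_f_bounds lo p'); lra. }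
    assert (phi * (p' - lo) <= f p' * (p' - lo)) by (apply Rmult_le_compat_r; [lra|apply f_decr; lra]).
    lra. }
  assert ((F hi - F p) * (p - G) <= phi * (hi - p) * (p - G)) by (apply Rmult_le_compat_r; lra).
  assert (phi * (p - p') * (hi - p) <= (F p - F p') * (hi - p)) by (apply Rmult_le_compat_r; lra).
  assert (phi * (p' - lo) * (hi - G) <= F p' * (hi - G)) by (apply Rmult_le_compat_r; lra).
  assert ((hi - p) * (p' - G) <= (hi - G) * (p' - lo)) by (apply Rmult_le_compat; lra).
  assert (phi * ((hi - p) * (p' - G)) <= phi * ((hi - G) * (p' - lo))) by (apply Rmult_le_compat_l; lra).
  lra.
Qed.

Lemma cond_mean_upper_tail_le p' p : lo <= p' -> p' <= p -> p <= hi -> 0 < F p' ->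
  (F hi - F p) * (hi - cond_mean p') <= (F hi - F p') * (hi - cond_mean p).
Proof.
  intros Hp' Hp'p Hp HFp'.
  pose proof (upper_tail_mass_le p' p Hp' Hp'p Hp HFp') as Htail.
  pose proof (F_le p' p Hp' Hp'p Hp); pose proof (F_le p hi ltac:(lra) Hp (Rle_refl hi)).
  destruct (RInt_xf_bounds p' p) as [_ HB]; [assumption..|].
  rewrite <- (F_diff p' p Hp' Hp'p Hp) in HB.
  unfold cond_mean at 2; rewrite <- (RInt_xf_split p' p) by assumption.
  set (G := cond_mean p') in *; set (B := RInt (fun x => x * f x) p' p) in *.
  assert (Hkey : (F hi - F p) * (hi - G) * F p <= (F hi - F p') * (hi * F p - (G * F p' + B))).
  { (* the gap is (F p - F p') times the upper-tail inequality
       plus (F hi - F p') (p (F p - F p') - B) *)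
    assert (0 <= (F p - F p') * (F p' * (hi - G) + (F p - F p') * (hi - p) - (F hi - F p) * (p - G)))
      by (apply Rmult_le_pos; lra).
    assert (0 <= (F hi - F p') * (p * (F p - F p') - B)) by (apply Rmult_le_pos; lra).
    lra. }
  apply (Rmult_le_reg_r (F p)); [lra|].
  replace ((F hi - F p') * (hi - (G * F p' + B) / F p) * F p)
    with ((F hi - F p') * (hi * F p - (G * F p' + B))) by (field; lra).
  exact Hkey.
Qed.

Lemma cond_mean_le_mixture p p' q : lo <= p <= hi -> lo <= p' <= hi ->
  0 < F p -> 0 < F p' -> F p < F hi -> 0 <= q <= 1 ->
  (p' < p -> (1 - q) * (F hi - F p') <= F hi - F p) ->
  cond_mean p <= q * hi + (1 - q) * cond_mean p'.
Proof.
  intros Hp Hp' HFp HFp' HFphi Hq Htail.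
  destruct (cond_mean_bounds p') as [_ HGp']; [lra|exact HFp'|].
  destruct (Rle_lt_dec p p') as [Hpp'|Hp'p].
  - pose proof (cond_mean_le_compat p p' (proj1 Hp) Hpp' (proj2 Hp') HFp).
    assert (q * cond_mean p' <= q * hi) by (apply Rmult_le_compat_l; lra).
    lra.
  - specialize (Htail Hp'p).
    pose proof (cond_mean_upper_tail_le p' p (proj1 Hp') (Rlt_le _ _ Hp'p) (proj2 Hp) HFp') as Hmean.
    pose proof (F_le p' p (proj1 Hp') (Rlt_le _ _ Hp'p) (proj2 Hp)).
    set (G := cond_mean p') in *.
    assert ((1 - q) * (F hi - F p') * (hi - G) <= (F hi - F p) * (hi - G))
      by (apply Rmult_le_compat_r; lra).
    assert (Hw : (1 - q) * (hi - G) <= hi - cond_mean p).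
    { apply (Rmult_le_reg_l (F hi - F p')); lra. }
    lra.
Qed.

End SpotPrice.

Theorem proposition2 (lo hi tk te ts : R) (f F : R -> R) :
  spot_price_model lo hi f F ->
  0 < tk -> 0 < te -> 0 < ts -> te < ts ->
  (* implicit in the paper: F^{-1}(1 - tk/te) is a genuine interior quantile *)
  tk < te ->
  (* implicit in the paper: the claimed point satisfies the deadline constraint,
     i.e. tk (1/F(p_opt) - 1) + te <= ts with F(p_opt) = 1 - tk/te *)
  tk * (1 / (1 - tk / te) - 1) + te <= ts ->
  P1_optimal lo hi tk te ts f F (Finv lo hi F (1 - tk / te)) 0.
Proof.
  intros [[_ Hlohi] [f_ge0 [f_decr [f_int [f_mass F_RInt]]]]] Htk Hte Hts _ Htkte Hdeadline.
  set (c := 1 - tk / te) in *.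
  assert (Htk_c : tk = te * (1 - c)) by (unfold c; field; lra).
  assert (Hc : 0 < c < 1) by (split; nra).
  assert (Flo : F lo = 0) by (rewrite F_RInt by lra; exact (RInt_point (V := R_CompleteNormedModule) lo f)).
  assert (Fhi : F hi = 1) by (rewrite F_RInt by lra; exact f_mass).
  assert (Hps : lo <= Finv lo hi F c <= hi) by (apply Finv_bounds; lra).
  assert (Fps : F (Finv lo hi F c) = c)
    by (apply (F_Finv_density lo hi f F f_ge0 f_decr f_int F_RInt); lra).
  set (ps := Finv lo hi F c) in *.
  split.
  - unfold P1_feasible; rewrite Fps; repeat split; try lra.
    intros _; replace (tk / (1 - c)) with te by (rewrite Htk_c; field; lra); lra.
  - intros p' q' (Hdemand & [HFp' _] & _ & Hp' & Hq).
    rewrite !Phi1_cond_mean; apply Rmult_le_compat_l; [lra|].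
    replace (0 * hi + (1 - 0) * cond_mean lo f F ps) with (cond_mean lo f F ps) by ring.
    apply (cond_mean_le_mixture lo hi f F); try assumption; try lra.
    intro Hp'ps.
    assert (HFp'c : F p' < c).
    { destruct (Rlt_le_dec (F p') c) as [Hlt|Hge]; [exact Hlt|].
      assert (ps <= p') by (apply (Finv_le lo hi c F); lra).
      lra. }
    specialize (Hdemand ltac:(lra)).
    apply Rle_div_r in Hdemand; [|lra].
    rewrite Fhi, Fps; apply (Rmult_le_reg_l te); [exact Hte|].
    lra.
Qed.
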